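(* Let $\gamma>0$ and $m\ge1$. For each $y\in\{\pm1\}^m$ let $r_y\in\mathbb{R}^m$ satisfy $r_y[i]y[i]\ge\gamma$ for all $i\in[m]$, and let $R=\{r_y\mid y\in\{\pm1\}^m\}$. Then $\{\pm\gamma\}^m\subseteq\mathrm{conv}(R)$.
   Context: $\mathrm{conv}(R)$ denotes the convex hull of $R$. *)

From HB Require Import structures.
From mathcomp Require Import all_boot all_order all_algebra.
Set Implicit Arguments. Unset Strict Implicit. Unset Printing Implicit Defensive.
Import Order.TTheory GRing.Theory Num.Theory.
Local Open Scope ring_scope.

Definition conv (R : realFieldType) (m : nat) (S : 'rV[R]_m -> Prop)
  (x : 'rV[R]_m) : Prop :=
  exists (n : nat) (p : 'I_n -> 'rV[R]_m) (w : 'I_n -> R),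
    [/\ (forall i, S (p i)), (forall i, 0 <= w i),
        \sum_(i < n) w i = 1 & x = \sum_(i < n) w i *: p i].

Definition sign_vec (R : realFieldType) (m : nat) (y : 'rV[R]_m) : Prop :=
  forall i, y 0 i = 1 \/ y 0 i = -1.

(* Every convex set meeting all "γ-orthants" contains the box [-γ, γ]^m.

   For a sign pattern t : 'I_m -> bool, write s_t for the corresponding vector
   of {±1}^m.  Let C be convex and assume that for every t some point q t of C
   satisfies (q t)_i (s_t)_i >= γ for all i.  Given x in the box [-γ, γ]^m we
   replace, one coordinate at a time, the family q by a family whose k-th
   coordinate equals x_k: pair the patterns t differing only at k and take
   the convex combination of the two corresponding points whose k-th
   coordinate is x_k (possible since one is >= γ, the other <= -γ, and
   |x_k| <= γ).  Convexity keeps the new points in C, and the half-spaces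
   { z | z_i (s_t)_i >= γ } for the other coordinates are preserved.  After m
   steps every point of the family equals x, so x lies in C.

   The theorem follows by taking for C the set of convex combinations of the
   points r(s_t), a subset of conv(R). *)

From HB Require Import structures.
From mathcomp Require Import all_boot all_order all_algebra.
From mathcomp Require Import ring lra.
Set Implicit Arguments. Unset Strict Implicit. Unset Printing Implicit Defensive.
Import Order.TTheory GRing.Theory Num.Theory.
Local Open Scope ring_scope.

Lemma interpolate (R : realFieldType) (gamma a b c : R) : 0 < gamma ->
  gamma <= a -> b <= - gamma -> - gamma <= c <= gamma ->
  exists2 l, 0 <= l <= 1 & l * a + (1 - l) * b = c.
Proof.
move=> gamma_gt0 ha hb /andP[c_lo c_hi].
have d_gt0 : 0 < a - b by lra.
exists ((c - b) / (a - b)); last by field; lra.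
apply/andP; split; first by apply: divr_ge0; lra.
by rewrite ler_pdivrMr // mul1r; lra.
Qed.

Lemma halfspace_convex (R : realFieldType) (gamma l u w s : R) :
  0 <= l <= 1 -> gamma <= u * s -> gamma <= w * s ->
  gamma <= (l * u + (1 - l) * w) * s.
Proof.
move=> /andP[l_ge0 l_le1] hu hw.
have -> : (l * u + (1 - l) * w) * s = l * (u * s) + (1 - l) * (w * s) by ring.
have : l * gamma <= l * (u * s) by apply: ler_wpM2l.
have : (1 - l) * gamma <= (1 - l) * (w * s) by apply: ler_wpM2l; lra.
lra.
Qed.

Section BoxInConvex.

Variables (R : realFieldType) (m : nat).

Definition sign_row (t : {ffun 'I_m -> bool}) : 'rV[R]_m :=
  \row_i (if t i then 1 else -1).

Lemma sign_rowP (t : {ffun 'I_m -> bool}) : sign_vec (sign_row t).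
Proof. by move=> i; rewrite mxE; case: (t i); [left | right]. Qed.

Definition set_bit (t : {ffun 'I_m -> bool}) (k : 'I_m) (b : bool) :=
  [ffun j => if j == k then b else t j].

Definition convex_pred (C : 'rV[R]_m -> Prop) : Prop :=
  forall (l : R) u v, 0 <= l <= 1 -> C u -> C v -> C (l *: u + (1 - l) *: v).

Variable gamma : R.
Hypothesis gamma_gt0 : 0 < gamma.
Variables (C : 'rV[R]_m -> Prop) (x : 'rV[R]_m).
Hypothesis C_convex : convex_pred C.
Hypothesis x_box : forall i, - gamma <= x 0 i <= gamma.

Definition stage (k : nat) (q : {ffun 'I_m -> bool} -> 'rV[R]_m) : Prop :=
  [/\ forall t, C (q t),
      forall t (i : 'I_m), (i < k)%N -> gamma <= q t 0 i * sign_row t 0 i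
    & forall t (i : 'I_m), (k <= i)%N -> q t 0 i = x 0 i].

(* One coordinate can be fixed to its value in x: for each t, combine the
   points of the patterns t[k := true] and t[k := false], whose k-th
   coordinates lie on either side of [-γ, γ]. *)
Lemma stage_step (k : nat) (q : {ffun 'I_m -> bool} -> 'rV[R]_m) :
  (k < m)%N -> stage k.+1 q -> exists q', stage k q'.
Proof.
move=> km [qC q_dom q_eq]; pose k' := Ordinal km.
pose a t := q (set_bit t k' true) 0 k'.
pose b t := q (set_bit t k' false) 0 k'.
have ha t : gamma <= a t.
  by have := q_dom (set_bit t k' true) k' (ltnSn k); rewrite mxE ffunE eqxx mulr1.
have hb t : b t <= - gamma.
  have := q_dom (set_bit t k' false) k' (ltnSn k).
  by rewrite mxE ffunE eqxx mulrN1 lerNr.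
have lP t := interpolate gamma_gt0 (ha t) (hb t) (x_box k').
pose l t := sval (sig2_eqW (lP t)).
have l01 t : 0 <= l t <= 1 by rewrite /l; case: sig2_eqW.
have l_comb t : l t * a t + (1 - l t) * b t = x 0 k'.
  by rewrite /l; case: sig2_eqW.
exists (fun t => l t *: q (set_bit t k' true) + (1 - l t) *: q (set_bit t k' false)).
split=> [t | t i ik | t i ki]; first exact: C_convex.
- have ne : (i == k') = false by apply/negbTE; rewrite -val_eqE neq_ltn ik.
  have ik1 : (i < k.+1)%N by apply: ltnW.
  have := q_dom (set_bit t k' true) i ik1; have := q_dom (set_bit t k' false) i ik1.
  rewrite !mxE !ffunE ne => h2 h1.
  exact: halfspace_convex.
- rewrite !mxE; case: (ltnP k i) => [ki' | ik]; first by rewrite !q_eq //; ring.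
  have -> : i = k' by apply: val_inj; apply/eqP; rewrite eqn_leq ik ki.
  exact: l_comb.
Qed.

Lemma stage_mem (k : nat) (q : {ffun 'I_m -> bool} -> 'rV[R]_m) :
  (k <= m)%N -> stage k q -> C x.
Proof.
elim: k q => [|k IH] q km qS.
  have [qC _ q_eq] := qS.
  have -> : x = q [ffun _ => true] by apply/rowP => i; rewrite q_eq.
  exact: qC.
have [q' q'S] := stage_step km qS.
exact: IH (ltnW km) q'S.
Qed.

Lemma box_in_convex (q : {ffun 'I_m -> bool} -> 'rV[R]_m) :
  (forall t, C (q t)) ->
  (forall t i, gamma <= q t 0 i * sign_row t 0 i) -> C x.
Proof.
move=> qC q_dom; apply: (@stage_mem m q (leqnn m)); split=> // t i hi.
by move: (ltn_ord i); rewrite ltnNge hi.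
Qed.

End BoxInConvex.

Section HullOfPatterns.

Variables (R : realFieldType) (m : nat) (r : 'rV[R]_m -> 'rV[R]_m).

Definition pattern_hull (v : 'rV[R]_m) : Prop :=
  exists M : {ffun 'I_m -> bool} -> R,
    [/\ forall t, 0 <= M t, \sum_t M t = 1 & v = \sum_t M t *: r (sign_row R t)].

Lemma pattern_hull_convex : convex_pred pattern_hull.
Proof.
move=> l _ _ /andP[l_ge0 l_le1] [M1 [M1_ge0 M1_sum ->]] [M2 [M2_ge0 M2_sum ->]].
exists (fun t => l * M1 t + (1 - l) * M2 t); split.
- by move=> t; apply: addr_ge0; apply: mulr_ge0 => //; rewrite subr_ge0.
- by rewrite big_split /= -!mulr_sumr M1_sum M2_sum !mulr1 addrC subrK.
- rewrite !scaler_sumr -big_split /=; apply: eq_bigr => t _.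
  by rewrite !scalerA -scalerDl.
Qed.

Lemma pattern_hull_point (t : {ffun 'I_m -> bool}) : pattern_hull (r (sign_row R t)).
Proof.
exists (fun u => (u == t)%:R); split=> [u | |]; first exact: ler0n.
- by rewrite (bigD1 t) //= eqxx big1 ?addr0 // => u /negbTE ->.
- rewrite (bigD1 t) //= eqxx scale1r big1 ?addr0 // => u /negbTE ->.
  by rewrite scale0r.
Qed.

Lemma pattern_hull_conv (v : 'rV[R]_m) : pattern_hull v ->
  conv (fun z => exists2 y, sign_vec y & z = r y) v.
Proof.
move=> [M [M_ge0 M_sum ->]].
exists #|{ffun 'I_m -> bool}|, (fun i => r (sign_row R (enum_val i))),
  (fun i => M (enum_val i)); split=> //.
- by move=> i; exists (sign_row R (enum_val i)) => //; apply: sign_rowP.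
- by rewrite -(big_enum_val (A := {ffun 'I_m -> bool})).
- by rewrite (big_enum_val (A := {ffun 'I_m -> bool})).
Qed.

End HullOfPatterns.

Theorem mainTheorem8 (R : realFieldType) (m : nat) (gamma : R)
  (r : 'rV[R]_m -> 'rV[R]_m)
  (hgamma : 0 < gamma) (hm : (1 <= m)%N)
  (hr : forall y, sign_vec y -> forall i, gamma <= r y 0 i * y 0 i) :
  forall x : 'rV[R]_m,
    (forall i, x 0 i = gamma \/ x 0 i = - gamma) ->
    conv (fun z => exists2 y, sign_vec y & z = r y) x.
Proof.
move=> x x_vertex; apply: pattern_hull_conv.
have x_box i : - gamma <= x 0 i <= gamma.
  by case: (x_vertex i) => ->; apply/andP; split; lra.
apply: (box_in_convex (q := fun t => r (sign_row R t)) hgamma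
         (@pattern_hull_convex _ _ r) x_box (@pattern_hull_point _ _ r)).
by move=> t; apply: hr; apply: sign_rowP.
Qed.
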